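(* Let $k$ be a field of characteristic $\neq2$, let $f\in k[X]$ be separable of degree $6$ with set of roots $\Omega\subset\bar k$, let $l=k(\Omega)$, let $A=k[X]/(f)$, and let $\delta\in A^*$. Let $k'\subseteq\bar k$ be an extension of $k$ containing $l$, and write $A_{k'}=A\otimes_kk'$. For $\omega\in\Omega$ let $\mu_\omega\in A_{k'}$ be the element with $\varphi_\theta(\mu_\omega)=-1$ if $\theta=\omega$ and $\varphi_\theta(\mu_\omega)=1$ otherwise, where $\varphi_\theta:A_{k'}\to k'$ is $X\mapsto\theta$. For $\varepsilon\in A_{k'}$ with $\varepsilon^2=\delta$, let $L_\varepsilon\subset\mathbb{P}(A_{k'})$ be the line corresponding to the subspace $\{\varepsilon^{-1}(sX+t): s,t\in k'\}$; it lies on $V_{f,\delta}$. Let $P_{\varepsilon,\omega}\in L_\varepsilon$ be the point corresponding to $\{s\varepsilon^{-1}(X-\omega): s\in k'\}$. For $\mu\in A_{k'}^*$ let $[\mu]$ denote the automorphism of $\mathbb{P}(A_{k'})$ induced by multiplication by $\mu$. Then: (i) $[\mu_\omega]P_{\varepsilon,\omega}=P_{\varepsilon,\omega}$ for all $\omega\in\Omega$ and all such $\varepsilon$. (ii) For $\varepsilon,\varepsilon'\in A_{k'}$ with $\varepsilon^2=\varepsilon'^2=\delta$, put $L=L_\varepsilon$ and $L'=L_{\varepsilon'}$. The lines $L$ and $L'$ intersect if and only if there exists $\omega\in\Omega$ with $[\mu_\omega]L=L'$. In that case the intersection point is $P_{\varepsilon,\omega}=P_{\varepsilon',\omega}$.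
   Context: $V_{f,\delta}\subset\mathbb{P}(A)$ is the set of classes of nonzero $q$ with $\delta q^2$ in the span of $1,X,X^2$. *)

From mathcomp Require Import all_boot all_order all_algebra all_field.
Set Implicit Arguments. Unset Strict Implicit. Unset Printing Implicit Defensive.
Import GRing.Theory.
Local Open Scope ring_scope.

(* A = k[X]/(f) is modelled as MathComp's {poly %/ h}, the quotient by the
   MONIC associate h of f (same ideal (f) = (h) since k is a field).        *)
Definition monicize (k : fieldType) (f : {poly k}) : {poly k} :=
  (lead_coef f)^-1 *: f.

(* A_{k'} = A (x)_k k' = k'[X]/(f), for an embedding iota : k -> k'. *)
Notation Aext iota f := {poly %/ map_poly iota (monicize f)}.

Definition base_change (k K : fieldType) (iota : {rmorphism k -> K})
    (f : {poly k}) (a : {poly %/ monicize f}) : Aext iota f :=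
  in_qpoly (map_poly iota (monicize f)) (map_poly iota (a : {poly k})).

Definition phi (K : fieldType) (h : {poly K}) (theta : K) (a : {poly %/ h}) : K :=
  (a : {poly K}).[theta].

Definition is_mu (K : fieldType) (h : {poly K}) (omega : K) (mu : {poly %/ h}) :=
  forall theta, root h theta -> phi theta mu = if theta == omega then -1 else 1.

(* Points and lines of P(A_{k'}) are 1- and 2-dimensional k'-subspaces. *)
Definition lineL (K : fieldType) (h : {poly K}) (eps : {poly %/ h}) :
    {vspace {poly %/ h}} :=
  << [:: (eps^-1 * 'qX)%R; (eps^-1)%R] >>%VS.

Definition pointP (K : fieldType) (h : {poly K}) (eps : {poly %/ h}) (omega : K) :
    {vspace {poly %/ h}} :=
  <[ (eps^-1 * ('qX - omega%:A))%R ]>%VS.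

Definition pmul (K : fieldType) (h : {poly K}) (mu : {poly %/ h})
    (U : {vspace {poly %/ h}}) : {vspace {poly %/ h}} :=
  << [seq (mu * v)%R | v <- vbasis U] >>%VS.

From mathcomp Require Import all_boot all_order all_algebra all_field.
Import GRing.Theory.
Local Open Scope ring_scope.
Set Implicit Arguments. Unset Strict Implicit. Unset Printing Implicit Defensive.

(* Evaluating at the roots identifies A_{k'} with a product of copies of k',
   and mu_omega is the sign vector that is -1 exactly at omega.  If
   eps^2 = eps'^2, then nu = eps'^-1 eps squares to 1 and carries L_eps onto
   L_eps'.  A common point eps^-1 p = eps'^-1 q of the two lines, with p, q of
   degree at most 1, gives p = nu q in A_{k'}, hence p^2 = q^2 as polynomials
   (their degree is below deg f), so p = +-q.  Thus +-nu fixes p, and as p has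
   at most one root, +-nu is -1 at exactly one root omega: it is mu_omega.
   Conversely mu_omega fixes eps^-1 (X - omega), so this point lies on L and
   on [mu_omega] L = L', and two distinct lines meet in at most a point. *)

Section MultiplicationOnSubspaces.

Variables (K : fieldType) (h : {poly K}).
Implicit Types (mu nu : {poly %/ h}) (U V : {vspace {poly %/ h}}).

Lemma memv_span_mul mu (X : seq {poly %/ h}) v :
  v \in <<X>>%VS -> mu * v \in << [seq (mu * x)%R | x <- X] >>%VS.
Proof.
move=> /(coord_span (X := in_tuple X)) ->; rewrite mulr_sumr.
apply: memv_suml => i _; rewrite -scalerAr memvZ // memv_span //.
by rewrite map_f // mem_nth.
Qed.

Lemma mem_pmul mu U v : v \in U -> mu * v \in pmul mu U.
Proof. by rewrite -{1}(span_basis (vbasisP U)); apply: memv_span_mul. Qed.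

Lemma pmul_span mu (X : seq {poly %/ h}) :
  pmul mu <<X>> = << [seq (mu * x)%R | x <- X] >>%VS.
Proof.
apply/eqP; rewrite eqEsubv; apply/andP; split.
all: apply/span_subvP => _ /mapP[x Xx ->].
  by rewrite memv_span_mul // vbasis_mem.
by rewrite mem_pmul // memv_span.
Qed.

Lemma pmulS mu U V : (U <= V)%VS -> (pmul mu U <= pmul mu V)%VS.
Proof.
move=> /subvP sUV; apply/span_subvP => _ /mapP[x Ux ->].
by rewrite mem_pmul // sUV // vbasis_mem.
Qed.

Lemma pmul1 U : pmul 1 U = U.
Proof. by rewrite /pmul (eq_map (@mul1r _)) map_id (span_basis (vbasisP U)). Qed.

Lemma pmulM mu nu U : pmul mu (pmul nu U) = pmul (mu * nu) U.
Proof. by rewrite [pmul nu U]/pmul pmul_span -map_comp (eq_map (mulrA _ _)). Qed.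

Lemma pmulN mu U : pmul (- mu) U = pmul mu U.
Proof.
apply/eqP; rewrite eqEsubv; apply/andP; split.
all: apply/span_subvP => _ /mapP[x Ux ->].
  by rewrite mulNr memvN (mem_pmul mu (vbasis_mem Ux)).
by rewrite -{1}[mu]opprK mulNr memvN (mem_pmul _ (vbasis_mem Ux)).
Qed.

End MultiplicationOnSubspaces.

Section LinesAndPoints.

Variables (K : fieldType) (h : {poly K}).
Implicit Types (mu e v : {poly %/ h}) (w : K).

Lemma pmul_lineL mu (e e' : {poly %/ h}) :
  mu * e^-1 = e'^-1 -> pmul mu (lineL e) = lineL e'.
Proof. by move=> mu_e; rewrite /lineL pmul_span /= mulrA mu_e. Qed.

Lemma dim_lineL e : (\dim (lineL e) <= 2)%N.
Proof. exact: dim_span. Qed.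

Lemma dimv_cap_lineL (e e' : {poly %/ h}) :
  lineL e != lineL e' -> (\dim (lineL e :&: lineL e') <= 1)%N.
Proof.
apply: contraR; rewrite -ltnNge => dim_cap.
have cap_eq e1 :
    (lineL e :&: lineL e' <= lineL e1)%VS -> (lineL e :&: lineL e')%VS = lineL e1.
  by move=> sub; apply/eqP; rewrite eqEdim sub (leq_trans (dim_lineL e1) dim_cap).
by rewrite -(cap_eq e (capvSl _ _)) (cap_eq e' (capvSr _ _)).
Qed.

Lemma subv_pointP_lineL e w : (pointP e w <= lineL e)%VS.
Proof.
by rewrite -memvE mulrBr mulr_algr memvB ?memvZ // memv_span // !inE eqxx ?orbT.
Qed.

Lemma mem_lineL e v :
  v \in lineL e -> exists2 p : {poly K}, (size p <= 2)%N & v = e^-1 * in_qpoly h p.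
Proof.
rewrite /lineL span_cons span_seq1.
case/memv_addP=> _ /vlineP[s ->] [_ /vlineP[t ->] ->].
exists (s *: 'X + t%:P).
  rewrite (leq_trans (size_polyD _ _)) // geq_max size_polyC (leq_trans (leq_b1 _)) //.
  by rewrite (leq_trans (size_scale_leq _ _)) ?size_polyX.
by rewrite -alg_polyC in_qpolyD !in_qpolyZ in_qpoly1 mulrDr mulr_algr -scalerAr.
Qed.

End LinesAndPoints.

Section Evaluation.

Variables (K : fieldType) (h : {poly K}).
Implicit Types (v : {poly %/ h}) (theta : K).

Lemma phiB theta v1 v2 : phi theta (v1 - v2) = phi theta v1 - phi theta v2.
Proof. by rewrite /phi /= hornerD hornerN. Qed.

Lemma phi1 theta : phi theta (1 : {poly %/ h}) = 1.
Proof. by rewrite /phi /= hornerC. Qed.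

Lemma phiA theta c : phi theta (c%:A : {poly %/ h}) = c.
Proof. by rewrite /phi /= hornerZ hornerC mulr1. Qed.

End Evaluation.

Section SplitQuotient.

Variables (K : fieldType) (rs : seq K) (h : {poly K}).
Hypotheses (h_split : h = \prod_(r <- rs) ('X - r%:P)) (rs_uniq : uniq rs).
Hypothesis rs_size : (2 < size rs)%N.

Implicit Types (mu nu e v : {poly %/ h}) (theta omega : K).

Lemma size_split : size h = (size rs).+1.
Proof. by rewrite h_split size_prod_XsubC. Qed.

Lemma root_split theta : root h theta = (theta \in rs).
Proof. by rewrite h_split root_prod_XsubC. Qed.

Lemma mk_monic_split : mk_monic h = h.
Proof.
by rewrite /mk_monic size_split ltnS (ltnW (ltnW rs_size)) h_split monic_prod_XsubC.
Qed.

Lemma size_qpoly_split v : (size (v : {poly K}) <= size rs)%N.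
Proof.
by have := size_mk_monic v; move: (v : {poly K}) => p; rewrite mk_monic_split size_split.
Qed.

Section AtARoot.

Variable theta : K.
Hypothesis root_theta : root h theta.

Lemma phi_in_qpoly p : phi theta (in_qpoly h p) = p.[theta].
Proof.
rewrite /phi /= mk_monic_split.
have hmonic : h \is monic by rewrite h_split monic_prod_XsubC.
rewrite [in RHS](Pdiv.RingMonic.rdivp_eq hmonic p) hornerD hornerM.
by rewrite (eqP root_theta) mulr0 add0r.
Qed.

Lemma phiM v1 v2 : phi theta (v1 * v2) = phi theta v1 * phi theta v2.
Proof. by rewrite -hornerM -phi_in_qpoly. Qed.

Lemma phiX : phi theta ('qX : {poly %/ h}) = theta.
Proof. by rewrite phi_in_qpoly hornerX. Qed.

End AtARoot.

Lemma phi_inj v1 v2 :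
  (forall theta, root h theta -> phi theta v1 = phi theta v2) -> v1 = v2.
Proof.
move=> phi_eq; apply/eqP; rewrite -subr_eq0; apply/eqP/val_inj => /=.
apply: (roots_geq_poly_eq0 _ rs_uniq); last exact: (size_qpoly_split (v1 - v2)).
apply/allP => theta rs_theta; apply/eqP.
rewrite -[_.[_]]/(phi theta (v1 - v2)) phiB phi_eq ?subrr //.
by rewrite root_split.
Qed.

Lemma is_mu_sqr omega mu : is_mu omega mu -> mu * mu = 1.
Proof.
move=> mu_def; apply: phi_inj => theta root_theta.
by rewrite phiM // phi1 mu_def //; case: eqP; rewrite ?mulrNN mulr1.
Qed.

Lemma is_mu_fixes_XsubC omega mu :
  is_mu omega mu -> mu * ('qX - omega%:A) = 'qX - omega%:A.
Proof.
move=> mu_def; apply: phi_inj => theta root_theta.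
rewrite phiM // phiB phiX // phiA mu_def //.
by case: eqVneq => [->|_]; rewrite ?subrr ?mulr0 ?mul1r.
Qed.

Lemma pmul_mu_pointP omega mu e :
  is_mu omega mu -> pmul mu (pointP e omega) = pointP e omega.
Proof.
by move=> mu_def; rewrite /pointP -span_seq1 pmul_span /= mulrCA is_mu_fixes_XsubC.
Qed.

Lemma qXsubC_neq0 omega : ('qX - omega%:A : {poly %/ h}) != 0.
Proof.
apply/eqP => /(congr1 val) /=.
rewrite mk_monic_split Pdiv.Ring.rmodp_small ?size_polyX ?size_split ?(leqW rs_size) //.
by rewrite scale_polyC mulr1 => /eqP; rewrite polyXsubC_eq0.
Qed.

Lemma pointP_neq0 e omega : e \is a GRing.unit -> pointP e omega != 0%VS.
Proof.
rewrite -unitrV => einv_unit; apply: contraNneq (qXsubC_neq0 omega) => P0.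
apply/eqP/(mulrI einv_unit); rewrite mulr0; apply/eqP.
by rewrite -memv0 -P0 memv_line.
Qed.

Lemma capv_lineL omega mu (e e' : {poly %/ h}) :
  e \is a GRing.unit -> is_mu omega mu ->
  pmul mu (lineL e) = lineL e' -> lineL e != lineL e' ->
  (lineL e :&: lineL e')%VS = pointP e omega.
Proof.
move=> e_unit mu_def mu_e neq_e.
have sub_e' : (pointP e omega <= lineL e')%VS.
  by rewrite -mu_e -(pmul_mu_pointP e mu_def) pmulS ?subv_pointP_lineL.
apply/esym/eqP; rewrite eqEdim subv_cap subv_pointP_lineL sub_e' /=.
by rewrite (leq_trans (dimv_cap_lineL neq_e)) // lt0n dimv_eq0 pointP_neq0.
Qed.

Lemma capv_lineL_pointP omega mu (e e' : {poly %/ h}) :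
  e \is a GRing.unit -> e' \is a GRing.unit -> is_mu omega mu ->
  pmul mu (lineL e) = lineL e' -> lineL e != lineL e' ->
  (lineL e :&: lineL e')%VS = pointP e omega /\ pointP e omega = pointP e' omega.
Proof.
move=> e_unit e'_unit mu_def mu_e neq_e.
have mu_e' : pmul mu (lineL e') = lineL e.
  by rewrite -mu_e pmulM (is_mu_sqr mu_def) pmul1.
rewrite -(capv_lineL e_unit mu_def mu_e neq_e).
by rewrite -(capv_lineL e'_unit mu_def mu_e') 1?eq_sym // capvC.
Qed.

Lemma is_mu_of_fixed nu (p : {poly K}) :
  nu * nu = 1 -> nu != 1 -> p != 0 -> (size p <= 2)%N ->
  nu * in_qpoly h p = in_qpoly h p ->
  exists2 omega, root h omega & is_mu omega nu.
Proof.
move=> nu_sqr nu_neq1 p_neq0 size_p nu_p.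
have phi_nu_p theta : root h theta -> (phi theta nu - 1) * p.[theta] = 0.
  by move=> root_theta; rewrite mulrBl mul1r -phi_in_qpoly // -phiM // nu_p subrr.
have [omega rs_omega nu_omega] : exists2 omega, omega \in rs & phi omega nu != 1.
  apply/hasP; apply: contraNT nu_neq1 => /hasPn phi_nu1; apply/eqP/phi_inj => theta.
  by rewrite root_split phi1 => /phi_nu1; rewrite negbK => /eqP.
have root_omega : root h omega by rewrite root_split.
have p_omega : p.[omega] = 0.
  apply/eqP; move/eqP: (phi_nu_p _ root_omega).
  by rewrite mulf_eq0 subr_eq0 (negPf nu_omega).
exists omega => // theta root_theta; case: eqVneq => [->|theta_neq].
  have := phiM root_omega nu nu; rewrite nu_sqr phi1 => /esym/eqP.
  by rewrite -expr2 sqrf_eq1 (negPf nu_omega) => /eqP.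
have p_theta : p.[theta] != 0.
  apply: contra_neq p_neq0 => p_theta.
  apply: (@roots_geq_poly_eq0 _ _ [:: theta; omega]) => //=.
  - by rewrite /root p_theta p_omega eqxx.
  - by rewrite inE theta_neq.
apply/eqP; move/eqP: (phi_nu_p _ root_theta).
by rewrite mulf_eq0 (negPf p_theta) orbF subr_eq0.
Qed.

Lemma lineL_meet (e e' : {poly %/ h}) :
  e \is a GRing.unit -> e' \is a GRing.unit -> e ^+ 2 = e' ^+ 2 ->
  lineL e != lineL e' -> (lineL e :&: lineL e')%VS != 0%VS ->
  exists omega mu, [/\ root h omega, is_mu omega mu & pmul mu (lineL e) = lineL e'].
Proof.
move=> e_unit e'_unit sqr_e neq_e meet_e.
set nu := e'^-1 * e.
have nu_e : nu * e^-1 = e'^-1 by rewrite mulrK.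
have nu_sqr : nu * nu = 1.
  by rewrite mulrACA -!expr2 sqr_e exprVn mulVr // unitrX.
have [v v_cap v_neq0] : exists2 v, v \in (lineL e :&: lineL e')%VS & v != 0.
  by move: meet_e; rewrite -subv0 => /subvPn[v v_cap]; rewrite memv0; exists v.
move: v_cap; rewrite memv_cap.
case/andP=> /mem_lineL[p size_p v_p] /mem_lineL[q size_q v_q].
have p_nuq : in_qpoly h p = nu * in_qpoly h q.
  have einv_unit : e^-1 \is a GRing.unit by rewrite unitrV.
  by apply: (mulrI einv_unit); rewrite mulrA [e^-1 * nu]mulrC nu_e -v_q -v_p.
have sqr_pq : p ^+ 2 = q ^+ 2.
  have size_sqr (r : {poly K}) :
      (size r <= 2)%N -> in_qpoly h (r ^+ 2) = r ^+ 2 :> {poly K}.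
    move=> size_r; apply: in_qpoly_small; rewrite mk_monic_split size_split ltnS.
    rewrite (leq_trans (size_poly_exp_leq _ _)) // (leq_trans _ rs_size) // ltnS.
    by rewrite (@leq_mul _ 2 1 2) // -subn1 leq_subLR.
  rewrite -size_sqr // -[RHS]size_sqr //; congr val.
  by rewrite !rmorphXn /= p_nuq exprMn expr2 nu_sqr mul1r.
have [sigma [sigma_sqr sigma_e sigma_p]] : exists sigma, [/\ sigma * sigma = 1,
    pmul sigma (lineL e) = lineL e' & sigma * in_qpoly h p = in_qpoly h p].
  have nu_L : pmul nu (lineL e) = lineL e' by apply: pmul_lineL.
  move/eqP: sqr_pq; rewrite eqf_sqr => /orP[/eqP p_q | /eqP p_Nq].
    by exists nu; rewrite {2}p_nuq p_q.
  by exists (- nu); rewrite mulrNN pmulN {2}p_nuq p_Nq raddfN mulrNN.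
have sigma_neq1 : sigma != 1.
  by apply: contraNneq neq_e => sigma1; rewrite -sigma_e sigma1 pmul1.
have p_neq0 : p != 0.
  by apply: contraNneq v_neq0 => p0; rewrite v_p p0 raddf0 mulr0.
have [omega root_omega sigma_def] :=
  is_mu_of_fixed sigma_sqr sigma_neq1 p_neq0 size_p sigma_p.
by exists omega, sigma.
Qed.

End SplitQuotient.

Section BaseChange.

Variables (k K : fieldType) (iota : {rmorphism k -> K}) (f : {poly k}).
Hypothesis f_size : (1 < size f)%N.

Let f_neq0 : f != 0. Proof. by rewrite -size_poly_gt0 ltnW. Qed.

Lemma monic_monicize : monicize f \is monic.
Proof. by apply/monicP; rewrite lead_coefZ mulVf ?lead_coef_eq0. Qed.

Lemma mk_monic_monicize : mk_monic (monicize f) = monicize f.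
Proof.
by rewrite /mk_monic size_scale ?invr_eq0 ?lead_coef_eq0 // f_size monic_monicize.
Qed.

Lemma mk_monic_map_monicize :
  mk_monic (map_poly iota (monicize f)) = map_poly iota (monicize f).
Proof.
rewrite /mk_monic size_map_poly map_monic monic_monicize andbT.
by rewrite size_scale ?invr_eq0 ?lead_coef_eq0 // f_size.
Qed.

Lemma base_change1 : base_change iota (1 : {poly %/ monicize f}) = 1.
Proof. by rewrite /base_change /= polyC1 rmorph1 in_qpoly1. Qed.

Lemma base_changeM (a b : {poly %/ monicize f}) :
  base_change iota (a * b) = base_change iota a * base_change iota b.
Proof.
rewrite /base_change -!rmorphM /=; move: ((a : {poly k}) * b) => p.
rewrite mk_monic_monicize; set m := monicize f.
rewrite [in RHS](Pdiv.RingMonic.rdivp_eq monic_monicize p) !rmorphD !rmorphM /=.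
suff -> : in_qpoly (map_poly iota m) (map_poly iota m) = 0 by rewrite mulr0 add0r.
apply: val_inj; rewrite /= mk_monic_map_monicize.
by rewrite Pdiv.RingMonic.rmodpp // map_monic monic_monicize.
Qed.

Lemma base_change_unit (a : {poly %/ monicize f}) :
  a \is a GRing.unit -> base_change iota a \is a GRing.unit.
Proof.
case/unitrP => b [ba ab]; apply/unitrP; exists (base_change iota b).
by rewrite -!base_changeM ba ab base_change1.
Qed.

End BaseChange.

Theorem proposition2p13
  (k K : fieldType) (iota : {rmorphism k -> K}) (f : {poly k})
  (delta : {poly %/ monicize f}) :
  (2 \notin [pchar k])%N ->
  separable_poly f ->
  size f = 7%N ->
  delta \is a GRing.unit ->
  (forall x : K, exists p : {poly k}, p != 0 /\ root (map_poly iota p) x) ->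
  (exists rs : seq K,
      map_poly iota (monicize f) = \prod_(r <- rs) ('X - r%:P)) ->
  let h := map_poly iota (monicize f) in
  let deltaK := base_change iota delta in
  (forall (omega : K) (mu eps : Aext iota f),
      root h omega -> is_mu omega mu -> eps ^+ 2 = deltaK ->
      pmul mu (pointP eps omega) = pointP eps omega)
  /\
  (forall eps eps' : Aext iota f,
      eps ^+ 2 = deltaK -> eps' ^+ 2 = deltaK ->
      lineL eps != lineL eps' ->
      ((lineL eps :&: lineL eps')%VS != 0%VS <->
         exists (omega : K) (mu : Aext iota f),
           [/\ root h omega, is_mu omega mu & pmul mu (lineL eps) = lineL eps'])
      /\
      (forall (omega : K) (mu : Aext iota f),
          root h omega -> is_mu omega mu -> pmul mu (lineL eps) = lineL eps' ->
          (lineL eps :&: lineL eps')%VS = pointP eps omega /\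
          pointP eps omega = pointP eps' omega)).
Proof.
move=> _ sep_f size_f delta_unit _ [rs h_split] h deltaK.
have f_neq0 : f != 0 by rewrite -size_poly_eq0 size_f.
have rs_uniq : uniq rs.
  rewrite -separable_prod_XsubC -h_split separable_map.
  by rewrite (eqp_separable (eqp_scale _ _)) ?invr_eq0 ?lead_coef_eq0.
have rs_size : (2 < size rs)%N.
  have := size_map_poly iota (monicize f).
  by rewrite h_split size_prod_XsubC size_scale ?invr_eq0 ?lead_coef_eq0 // size_f => -[->].
have eps_unit (eps : Aext iota f) : eps ^+ 2 = deltaK -> eps \is a GRing.unit.
  by move=> sqr_eps; rewrite -(unitrX_pos _ (ltn0Sn 1)) sqr_eps base_change_unit ?size_f.
split=> [omega mu eps _ mu_def _ | eps eps' sqr_eps sqr_eps' neq_e].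
  exact: (pmul_mu_pointP h_split rs_uniq rs_size eps mu_def).
have [unit_eps unit_eps'] := (eps_unit _ sqr_eps, eps_unit _ sqr_eps').
split; last first.
  move=> omega mu _ mu_def mu_e.
  exact: (capv_lineL_pointP h_split rs_uniq rs_size unit_eps unit_eps' mu_def mu_e).
split=> [meet_e | [omega [mu [_ mu_def mu_e]]]].
  apply: (lineL_meet h_split rs_uniq rs_size unit_eps unit_eps') => //.
  by rewrite sqr_eps sqr_eps'.
rewrite (capv_lineL h_split rs_uniq rs_size unit_eps mu_def mu_e neq_e).
exact: (pointP_neq0 h_split rs_size omega unit_eps).
Qed.
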